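(* Let $P=\{S_1,\ldots,S_n\}$ be a homothetic packing of $n$ squares with contact graph $G=([n],E)$. Let $\{i,j\}\in E$ and let $$p_{ij}=\left(x_i-\frac{r_i(x_i-x_j)}{r_i+r_j},\ y_i-\frac{r_i(y_i-y_j)}{r_i+r_j}\right).$$ Then: (1) the closed segment $[p_i,p_j]=\{tp_i+(1-t)p_j:t\in[0,1]\}$ is contained in $S_i\cup S_j$; (2) $[p_i,p_j]\setminus\{p_{ij}\}$ is contained in $S_i^\circ\cup S_j^\circ$; (3) $p_{ij}$ lies in the interior of $S_i\cup S_j$ if and only if $\{i,j\}\notin E_x\cap E_y$.
   Context: Let $S=\{(x,y): -1\le x,y\le 1\}$. A homothetic packing of $n$ squares is a set $P=\{S_1,\ldots,S_n\}$ with $S_i=r_iS+p_i$, $r_i>0$, $p_i=(x_i,y_i)\in\mathbb{R}^2$, such that distinct squares have disjoint interiors; $A^\circ$ denotes the interior of $A$. Its contact graph is $G=([n],E)$ where $\{i,j\}\in E$ iff $i\ne j$ and $S_i\cap S_j\ne\emptyset$. $E_x$ is the set of pairs $\{i,j\}\in E$ with $r_i+r_j=|x_i-x_j|\ge|y_i-y_j|$, and $E_y$ the set with $r_i+r_j=|y_i-y_j|\ge|x_i-x_j|$. *)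

From Stdlib Require Import Reals Lra.
Open Scope R_scope.

Definition pt := (R * R)%type.

Definition dist2 (p q : pt) : R :=
  sqrt ((fst p - fst q)^2 + (snd p - snd q)^2).

Definition interior2 (A : pt -> Prop) (p : pt) : Prop :=
  exists eps, 0 < eps /\ forall q, dist2 p q < eps -> A q.

Definition square (r : R) (c : pt) (q : pt) : Prop :=
  exists s : pt, -1 <= fst s <= 1 /\ -1 <= snd s <= 1 /\
    q = (r * fst s + fst c, r * snd s + snd c).

Definition homothetic_packing (n : nat) (r : nat -> R) (c : nat -> pt) : Prop :=
  (forall i, (i < n)%nat -> 0 < r i) /\
  (forall i j, (i < n)%nat -> (j < n)%nat -> i <> j ->
     forall q, ~ (interior2 (square (r i) (c i)) q /\ interior2 (square (r j) (c j)) q)).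

Definition contact_edge (n : nat) (r : nat -> R) (c : nat -> pt) (i j : nat) : Prop :=
  (i < n)%nat /\ (j < n)%nat /\ i <> j /\
  exists q, square (r i) (c i) q /\ square (r j) (c j) q.

Definition in_Ex (r : nat -> R) (c : nat -> pt) (i j : nat) : Prop :=
  r i + r j = Rabs (fst (c i) - fst (c j)) /\
  Rabs (fst (c i) - fst (c j)) >= Rabs (snd (c i) - snd (c j)).

Definition in_Ey (r : nat -> R) (c : nat -> pt) (i j : nat) : Prop :=
  r i + r j = Rabs (snd (c i) - snd (c j)) /\
  Rabs (snd (c i) - snd (c j)) >= Rabs (fst (c i) - fst (c j)).

Definition contact_point (r : nat -> R) (c : nat -> pt) (i j : nat) : pt :=
  (fst (c i) - r i * (fst (c i) - fst (c j)) / (r i + r j),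
   snd (c i) - r i * (snd (c i) - snd (c j)) / (r i + r j)).

Definition seg_pt (t : R) (p q : pt) : pt :=
  (t * fst p + (1 - t) * fst q, t * snd p + (1 - t) * snd q).

(* In the sup-norm the squares are balls, S_i = {q : |q - c_i|_oo <= r_i}.  Along the
   segment [c_i, c_j] the sup-distances to c_i and c_j are (1 - t) L and t L with
   L = |c_i - c_j|_oo, and a common point of S_i and S_j gives L <= r_i + r_j; this
   yields (1) and (2), the only point at sup-distance exactly r_i from c_i and r_j
   from c_j being p_ij.  Disjointness of the interiors forces L = r_i + r_j, since
   otherwise p_ij would be interior to both squares.  So the centres differ by
   r_i + r_j in at least one coordinate.  If only in one, the squares abut along a
   common side around p_ij, which is then interior to the union; if in both, p_ij is
   a common corner, and points off it diagonally (towards c_i in one coordinate and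
   towards c_j in the other) lie in neither square. *)

From Stdlib Require Import Reals Lra.
Open Scope R_scope.

Lemma Rabs_le_iff x y : Rabs x <= y <-> - y <= x <= y.
Proof.
  split.
  - intros H; split.
    + pose proof (Rle_abs (- x)); rewrite Rabs_Ropp in *; lra.
    + pose proof (Rle_abs x); lra.
  - apply Rabs_le.
Qed.

Definition linf (p q : pt) : R :=
  Rmax (Rabs (fst p - fst q)) (Rabs (snd p - snd q)).

Lemma linf_le_iff p q r :
  linf p q <= r <-> Rabs (fst p - fst q) <= r /\ Rabs (snd p - snd q) <= r.
Proof.
  unfold linf; split.
  - intros H.
    pose proof (Rmax_l (Rabs (fst p - fst q)) (Rabs (snd p - snd q))).
    pose proof (Rmax_r (Rabs (fst p - fst q)) (Rabs (snd p - snd q))).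
    lra.
  - intros [H1 H2]; apply Rmax_lub; assumption.
Qed.

Lemma linf_nonneg p q : 0 <= linf p q.
Proof.
  pose proof (Rabs_pos (fst p - fst q)).
  pose proof (Rmax_l (Rabs (fst p - fst q)) (Rabs (snd p - snd q))).
  unfold linf; lra.
Qed.

Lemma linf_sym p q : linf p q = linf q p.
Proof.
  unfold linf; rewrite (Rabs_minus_sym (fst p)), (Rabs_minus_sym (snd p)).
  reflexivity.
Qed.

Lemma linf_triangle p q s : linf p s <= linf p q + linf q s.
Proof.
  pose proof (proj1 (linf_le_iff p q _) (Rle_refl _)).
  pose proof (proj1 (linf_le_iff q s _) (Rle_refl _)).
  pose proof (Rdist_tri (fst p) (fst s) (fst q)).
  pose proof (Rdist_tri (snd p) (snd s) (snd q)).
  unfold Rdist in *; apply linf_le_iff; lra.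
Qed.

Lemma linf_seg_pt_r t p q : 0 <= t -> linf (seg_pt t p q) q = t * linf p q.
Proof.
  intros Ht; unfold linf, seg_pt; simpl.
  replace (t * fst p + (1 - t) * fst q - fst q) with (t * (fst p - fst q)) by ring.
  replace (t * snd p + (1 - t) * snd q - snd q) with (t * (snd p - snd q)) by ring.
  rewrite !Rabs_mult, (Rabs_pos_eq t Ht).
  apply RmaxRmult; assumption.
Qed.

Lemma linf_seg_pt_l t p q : t <= 1 -> linf (seg_pt t p q) p = (1 - t) * linf p q.
Proof.
  intros Ht; unfold linf, seg_pt; simpl.
  replace (t * fst p + (1 - t) * fst q - fst p) with ((1 - t) * (fst q - fst p)) by ring.
  replace (t * snd p + (1 - t) * snd q - snd p) with ((1 - t) * (snd q - snd p)) by ring.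
  rewrite !Rabs_mult, (Rabs_pos_eq (1 - t)) by lra.
  rewrite (Rabs_minus_sym (fst q)), (Rabs_minus_sym (snd q)).
  apply RmaxRmult; lra.
Qed.

Lemma square_iff r c q : 0 < r ->
  square r c q <-> Rabs (fst q - fst c) <= r /\ Rabs (snd q - snd c) <= r.
Proof.
  intros Hr; unfold square; split.
  - intros [s [Hx [Hy ->]]]; simpl.
    replace (r * fst s + fst c - fst c) with (r * fst s) by ring.
    replace (r * snd s + snd c - snd c) with (r * snd s) by ring.
    rewrite !Rabs_mult, (Rabs_pos_eq r) by lra.
    apply (proj2 (Rabs_le_iff _ 1)) in Hx; apply (proj2 (Rabs_le_iff _ 1)) in Hy.
    split; nra.
  - intros [Hx Hy]; exists ((fst q - fst c) / r, (snd q - snd c) / r); simpl.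
    apply Rabs_le_iff in Hx; apply Rabs_le_iff in Hy.
    assert (Hr' : 0 < / r) by (apply Rinv_0_lt_compat; lra).
    assert (Hrr : r * / r = 1) by (field; lra).
    unfold Rdiv; split; [|split]; [split; nra | split; nra |].
    destruct q; simpl; f_equal; field; lra.
Qed.

Lemma square_iff_linf r c q : 0 < r -> square r c q <-> linf q c <= r.
Proof. intros Hr; rewrite square_iff, linf_le_iff by exact Hr; reflexivity. Qed.

Lemma abs_fst_le_dist2 p q : Rabs (fst p - fst q) <= dist2 p q.
Proof.
  unfold dist2; rewrite <- (sqrt_pow2 (Rabs _)) by apply Rabs_pos.
  apply sqrt_le_1_alt; rewrite pow2_abs.
  pose proof (pow2_ge_0 (snd p - snd q)); lra.
Qed.

Lemma abs_snd_le_dist2 p q : Rabs (snd p - snd q) <= dist2 p q.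
Proof.
  unfold dist2; rewrite <- (sqrt_pow2 (Rabs _)) by apply Rabs_pos.
  apply sqrt_le_1_alt; rewrite pow2_abs.
  pose proof (pow2_ge_0 (fst p - fst q)); lra.
Qed.

Lemma dist2_le_abs_sum p q :
  dist2 p q <= Rabs (fst p - fst q) + Rabs (snd p - snd q).
Proof.
  unfold dist2.
  pose proof (Rabs_pos (fst p - fst q)); pose proof (Rabs_pos (snd p - snd q)).
  rewrite <- (sqrt_pow2 (Rabs (fst p - fst q) + Rabs (snd p - snd q))) by lra.
  apply sqrt_le_1_alt.
  rewrite <- (pow2_abs (fst p - fst q)), <- (pow2_abs (snd p - snd q)); nra.
Qed.

Lemma interior2_of_box (A : pt -> Prop) p ex ey : 0 < ex -> 0 < ey ->
  (forall q, Rabs (fst q - fst p) < ex -> Rabs (snd q - snd p) < ey -> A q) ->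
  interior2 A p.
Proof.
  intros Hex Hey HA; exists (Rmin ex ey); split; [apply Rmin_glb_lt; assumption|].
  intros q Hq; pose proof (Rmin_l ex ey); pose proof (Rmin_r ex ey).
  pose proof (abs_fst_le_dist2 p q); pose proof (abs_snd_le_dist2 p q).
  rewrite Rabs_minus_sym in *.
  apply HA; lra.
Qed.

Lemma interior2_square_of_linf_lt r c q : linf q c < r -> interior2 (square r c) q.
Proof.
  intros Hq; pose proof (linf_nonneg q c).
  apply (interior2_of_box _ _ (r - linf q c) (r - linf q c)); try lra.
  intros q' Hx Hy; apply square_iff_linf; [lra|].
  pose proof (linf_triangle q' q c).
  enough (linf q' q <= r - linf q c) by lra.
  apply linf_le_iff; lra.
Qed.

Section TwoSquares.

Variables (ri rj : R) (ci cj : pt).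
Hypotheses (Hri : 0 < ri) (Hrj : 0 < rj).

Lemma linf_le_of_common_point q :
  square ri ci q -> square rj cj q -> linf ci cj <= ri + rj.
Proof.
  intros Hi Hj; apply square_iff_linf in Hi, Hj; try assumption.
  pose proof (linf_triangle ci q cj); rewrite (linf_sym ci q) in *; lra.
Qed.

Lemma linf_ge_of_disjoint_interiors :
  (forall q, ~ (interior2 (square ri ci) q /\ interior2 (square rj cj) q)) ->
  ri + rj <= linf ci cj.
Proof.
  intros Hdisj; apply Rnot_lt_le; intros Hlt.
  set (t := rj / (ri + rj)).
  assert (Htj : t * (ri + rj) = rj) by (unfold t; field; lra).
  assert (Ht : 0 < t < 1) by (split; nra).
  apply (Hdisj (seg_pt t ci cj)); split; apply interior2_square_of_linf_lt.
  - rewrite linf_seg_pt_l by lra; nra.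
  - rewrite linf_seg_pt_r by lra; nra.
Qed.

Hypothesis Hle : linf ci cj <= ri + rj.

Lemma seg_pt_in_squares t : 0 <= t <= 1 ->
  square ri ci (seg_pt t ci cj) \/ square rj cj (seg_pt t ci cj).
Proof.
  intros Ht; pose proof (linf_nonneg ci cj).
  rewrite !square_iff_linf, linf_seg_pt_l, linf_seg_pt_r by lra.
  destruct (Rle_dec (t * (ri + rj)) rj); [right | left]; nra.
Qed.

Lemma seg_pt_in_interiors t : 0 <= t <= 1 ->
  seg_pt t ci cj <> seg_pt (rj / (ri + rj)) ci cj ->
  interior2 (square ri ci) (seg_pt t ci cj) \/
  interior2 (square rj cj) (seg_pt t ci cj).
Proof.
  intros Ht Hne; pose proof (linf_nonneg ci cj).
  assert (Htj : rj / (ri + rj) * (ri + rj) = rj) by (field; lra).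
  destruct (total_order_T t (rj / (ri + rj))) as [[Hlt | Heq] | Hgt].
  - right; apply interior2_square_of_linf_lt.
    rewrite linf_seg_pt_r by lra; nra.
  - contradiction (Hne (f_equal (fun u => seg_pt u ci cj) Heq)).
  - left; apply interior2_square_of_linf_lt.
    rewrite linf_seg_pt_l by lra; nra.
Qed.

End TwoSquares.

Section ContactCoordinate.

Variables (a b ra rb : R).
Hypotheses (Hra : 0 < ra) (Hrb : 0 < rb).

(* [s] is a coordinate of p_ij when the corresponding coordinates of c_i, c_j are [a], [b]. *)
Let s := rb / (ra + rb) * a + (1 - rb / (ra + rb)) * b.

Lemma contact_coord_sub_l : s - a = - (ra / (ra + rb) * (a - b)).
Proof. unfold s; field; lra. Qed.

Lemma contact_coord_sub_r : s - b = rb / (ra + rb) * (a - b).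
Proof. unfold s; field; lra. Qed.

Lemma contact_coord_touching : Rabs (a - b) = ra + rb ->
  (s = a - ra /\ s = b + rb) \/ (s = a + ra /\ s = b - rb).
Proof.
  intros Hab; pose proof contact_coord_sub_l; pose proof contact_coord_sub_r.
  assert (Hl : ra / (ra + rb) * (ra + rb) = ra) by (field; lra).
  assert (Hr : rb / (ra + rb) * (ra + rb) = rb) by (field; lra).
  destruct (Rle_dec 0 (a - b)).
  - rewrite Rabs_pos_eq in Hab by assumption.
    left; rewrite Hab in *; lra.
  - rewrite Rabs_left in Hab by lra.
    right; replace (a - b) with (- (ra + rb)) in * by lra; lra.
Qed.

Lemma contact_coord_cover x : Rabs (a - b) = ra + rb ->
  Rabs (x - s) <= Rmin ra rb -> Rabs (x - a) <= ra \/ Rabs (x - b) <= rb.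
Proof.
  intros Hab Hx; pose proof (Rmin_l ra rb); pose proof (Rmin_r ra rb).
  apply Rabs_le_iff in Hx; rewrite !Rabs_le_iff.
  destruct (contact_coord_touching Hab) as [[Ha Hb] | [Ha Hb]];
    destruct (Rle_dec x s); lra.
Qed.

Lemma contact_coord_escape d : Rabs (a - b) = ra + rb -> 0 < d ->
  (exists x, Rabs (x - s) = d /\ ra < Rabs (x - a)) /\
  (exists x, Rabs (x - s) = d /\ rb < Rabs (x - b)).
Proof.
  intros Hab Hd.
  destruct (contact_coord_touching Hab) as [[Ha Hb] | [Ha Hb]]; split.
  - exists (s - d); rewrite Rabs_left, Rabs_left; lra.
  - exists (s + d); rewrite !Rabs_pos_eq; lra.
  - exists (s + d); rewrite !Rabs_pos_eq; lra.
  - exists (s - d); rewrite Rabs_left, Rabs_left; lra.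
Qed.

Lemma contact_coord_inside : Rabs (a - b) < ra + rb ->
  exists e, 0 < e /\
    forall x, Rabs (x - s) < e -> Rabs (x - a) <= ra /\ Rabs (x - b) <= rb.
Proof.
  intros Hab; pose proof (Rabs_pos (a - b)).
  assert (Hka : ra / (ra + rb) * (ra + rb) = ra) by (field; lra).
  assert (Hkb : rb / (ra + rb) * (ra + rb) = rb) by (field; lra).
  assert (Hka0 : 0 < ra / (ra + rb)) by (apply Rdiv_lt_0_compat; lra).
  assert (Hkb0 : 0 < rb / (ra + rb)) by (apply Rdiv_lt_0_compat; lra).
  assert (Hsa : Rabs (s - a) < ra).
  { rewrite contact_coord_sub_l, Rabs_Ropp, Rabs_mult, Rabs_pos_eq by lra; nra. }
  assert (Hsb : Rabs (s - b) < rb).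
  { rewrite contact_coord_sub_r, Rabs_mult, Rabs_pos_eq by lra; nra. }
  exists (Rmin (ra - Rabs (s - a)) (rb - Rabs (s - b))).
  split; [apply Rmin_glb_lt; lra|].
  intros x Hx; pose proof (Rmin_l (ra - Rabs (s - a)) (rb - Rabs (s - b))).
  pose proof (Rmin_r (ra - Rabs (s - a)) (rb - Rabs (s - b))).
  pose proof (Rdist_tri x a s); pose proof (Rdist_tri x b s); unfold Rdist in *.
  lra.
Qed.

End ContactCoordinate.

Section ContactPoint.

Variables (ri rj : R) (ci cj : pt).
Hypotheses (Hri : 0 < ri) (Hrj : 0 < rj).

Let p := seg_pt (rj / (ri + rj)) ci cj.
Let union := fun q => square ri ci q \/ square rj cj q.

Lemma corner_contact_not_interior :
  Rabs (fst ci - fst cj) = ri + rj -> Rabs (snd ci - snd cj) = ri + rj ->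
  ~ interior2 union p.
Proof.
  intros Hx Hy [e [He Hint]].
  destruct (contact_coord_escape (fst ci) (fst cj) ri rj Hri Hrj (e / 4) Hx)
    as [_ [qx [Hqx Hqxj]]]; [lra|].
  destruct (contact_coord_escape (snd ci) (snd cj) ri rj Hri Hrj (e / 4) Hy)
    as [[qy [Hqy Hqyi]] _]; [lra|].
  destruct (Hint (qx, qy)) as [Hi | Hj].
  - pose proof (dist2_le_abs_sum p (qx, qy)).
    unfold p, seg_pt in *; simpl in *.
    rewrite (Rabs_minus_sym _ qx), (Rabs_minus_sym _ qy) in *; lra.
  - apply square_iff in Hi; simpl in Hi; lra.
  - apply square_iff in Hj; simpl in Hj; lra.
Qed.

Lemma side_contact_interior :
  (Rabs (fst ci - fst cj) = ri + rj /\ Rabs (snd ci - snd cj) < ri + rj) \/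
  (Rabs (snd ci - snd cj) = ri + rj /\ Rabs (fst ci - fst cj) < ri + rj) ->
  interior2 union p.
Proof.
  assert (Hmin : 0 < Rmin ri rj) by (apply Rmin_glb_lt; assumption).
  unfold union, p, seg_pt; intros [[Hx Hy] | [Hy Hx]].
  - destruct (contact_coord_inside (snd ci) (snd cj) ri rj Hri Hrj Hy) as [e [He Hin]].
    apply (interior2_of_box _ _ (Rmin ri rj) e Hmin He); simpl.
    intros q Hqx Hqy; rewrite !square_iff by assumption.
    destruct (Hin _ Hqy).
    destruct (contact_coord_cover (fst ci) (fst cj) ri rj Hri Hrj (fst q) Hx);
      [lra | left | right]; tauto.
  - destruct (contact_coord_inside (fst ci) (fst cj) ri rj Hri Hrj Hx) as [e [He Hin]].
    apply (interior2_of_box _ _ e (Rmin ri rj) He Hmin); simpl.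
    intros q Hqx Hqy; rewrite !square_iff by assumption.
    destruct (Hin _ Hqx).
    destruct (contact_coord_cover (snd ci) (snd cj) ri rj Hri Hrj (snd q) Hy);
      [lra | left | right]; tauto.
Qed.

Lemma seg_pt_contact_interior_iff : linf ci cj = ri + rj ->
  interior2 union p <->
  ~ (Rabs (fst ci - fst cj) = ri + rj /\ Rabs (snd ci - snd cj) = ri + rj).
Proof.
  intros HL; destruct (proj1 (linf_le_iff ci cj _) (Req_le _ _ HL)) as [Hx Hy].
  split.
  - intros Hint [Hx' Hy']; exact (corner_contact_not_interior Hx' Hy' Hint).
  - intros Hnot; apply side_contact_interior.
    destruct (Req_dec (Rabs (fst ci - fst cj)) (ri + rj));
      destruct (Req_dec (Rabs (snd ci - snd cj)) (ri + rj)).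
    + tauto.
    + left; lra.
    + right; lra.
    + assert (linf ci cj < ri + rj) by (apply Rmax_lub_lt; lra); lra.
Qed.

End ContactPoint.

Lemma contact_point_seg_pt r c i j : r i + r j <> 0 ->
  contact_point r c i j = seg_pt (r j / (r i + r j)) (c i) (c j).
Proof. intros HD; unfold contact_point, seg_pt; f_equal; field; assumption. Qed.

Lemma in_Ex_in_Ey_iff r c i j : linf (c i) (c j) <= r i + r j ->
  in_Ex r c i j /\ in_Ey r c i j <->
  Rabs (fst (c i) - fst (c j)) = r i + r j /\ Rabs (snd (c i) - snd (c j)) = r i + r j.
Proof. unfold in_Ex, in_Ey; rewrite linf_le_iff; lra. Qed.

Theorem lemma11 (n : nat) (r : nat -> R) (c : nat -> pt) (i j : nat) :
  homothetic_packing n r c ->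
  contact_edge n r c i j ->
  (* (1) *)
  (forall t, 0 <= t <= 1 ->
     square (r i) (c i) (seg_pt t (c i) (c j)) \/
     square (r j) (c j) (seg_pt t (c i) (c j))) /\
  (* (2) *)
  (forall t, 0 <= t <= 1 ->
     seg_pt t (c i) (c j) <> contact_point r c i j ->
     interior2 (square (r i) (c i)) (seg_pt t (c i) (c j)) \/
     interior2 (square (r j) (c j)) (seg_pt t (c i) (c j))) /\
  (* (3) *)
  (interior2 (fun q => square (r i) (c i) q \/ square (r j) (c j) q)
             (contact_point r c i j)
   <-> ~ (in_Ex r c i j /\ in_Ey r c i j)).
Proof.
  intros [Hpos Hdisj] [Hi [Hj [Hij [q [Hqi Hqj]]]]].
  pose proof (Hpos i Hi) as Hri; pose proof (Hpos j Hj) as Hrj.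
  pose proof (linf_le_of_common_point _ _ _ _ Hri Hrj q Hqi Hqj) as Hle.
  pose proof (linf_ge_of_disjoint_interiors _ _ _ _ Hri Hrj (Hdisj i j Hi Hj Hij)).
  rewrite in_Ex_in_Ey_iff, contact_point_seg_pt by lra.
  split; [| split].
  - intros t Ht; apply seg_pt_in_squares; assumption.
  - intros t Ht; apply seg_pt_in_interiors; assumption.
  - apply seg_pt_contact_interior_iff; lra.
Qed.
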